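(* For each $r\in\mathcal R_n$ and $a\in A(r)$, the map $A(r^a)\to A(r)$, $(b_1,\dots,b_n,b_{n+1})\mapsto(b_1,\dots,b_n)$, is surjective.
   Context: $\mathcal R_n$ is the set of real symmetric $n\times n$ matrices with zero diagonal, nonnegative entries and $r_{i,k}+r_{k,j}\ge r_{i,j}$. For $r\in\mathcal R_n$, $A(r)=\{a\in\mathbb R^n: |a_i-a_j|\le r_{i,j}\le a_i+a_j\ \forall i,j\}$, and for $a\in A(r)$, $r^a\in\mathcal R_{n+1}$ is $r$ bordered by $a$ as last row and column (with $0$ on the diagonal). *)

From HB Require Import structures.
From mathcomp Require Import all_boot all_order all_algebra.
From mathcomp Require Import reals.
Set Implicit Arguments. Unset Strict Implicit. Unset Printing Implicit Defensive.
Import Order.TTheory GRing.Theory Num.Theory.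
Local Open Scope ring_scope.

Section Defs.
Variable R : realType.

Definition in_Rn (n : nat) (r : 'M[R]_n) : Prop :=
  (forall i j, r i j = r j i) /\
  (forall i, r i i = 0) /\
  (forall i j, 0 <= r i j) /\
  (forall i j k, r i j <= r i k + r k j).

Definition in_A (n : nat) (r : 'M[R]_n) (a : 'rV[R]_n) : Prop :=
  forall i j, `|a ord0 i - a ord0 j| <= r i j /\ r i j <= a ord0 i + a ord0 j.

(* r^a : r bordered by a as last row and column, 0 on the diagonal.
   The last index is ord_max; the old indices i : 'I_n are lift ord_max i. *)
Definition border (n : nat) (r : 'M[R]_n) (a : 'rV[R]_n) : 'M[R]_n.+1 :=
  \matrix_(i, j)
    match unlift ord_max i, unlift ord_max j with
    | Some i', Some j' => r i' j'
    | Some i', None => a ord0 i'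
    | None, Some j' => a ord0 j'
    | None, None => 0
    end.

Definition proj_last (n : nat) (b : 'rV[R]_n.+1) : 'rV[R]_n :=
  \row_i b ord0 (lift ord_max i).

End Defs.

From HB Require Import structures.
From mathcomp Require Import all_boot all_order all_algebra.
From mathcomp Require Import reals.
From mathcomp Require Import lra.
Set Implicit Arguments. Unset Strict Implicit. Unset Printing Implicit Defensive.
Import Order.TTheory GRing.Theory Num.Theory.
Local Open Scope ring_scope.

(* Extending b in A(r) to A(r^a) amounts to choosing the new coordinate x
   with |a_i - b_i| <= x <= a_j + b_j for all i, j (and x >= 0 for the new
   diagonal entry). Such an x exists, e.g. x = max_i |a_i - b_i|, because
   a_i <= a_j + r_ij <= a_j + b_i + b_j and symmetrically with a and b
   exchanged. *)

Section Extension.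
Variables (R : realType) (n : nat) (r : 'M[R]_n).

Lemma in_A_ge0 (a : 'rV[R]_n) i : in_A r a -> 0 <= a ord0 i.
Proof.
move=> hA; have [] := hA i i; rewrite subrr normr0 => h0 h.
have := le_trans h0 h; lra.
Qed.

Lemma in_A_dist_le (a b : 'rV[R]_n) i j :
  in_A r a -> in_A r b -> `|a ord0 i - b ord0 i| <= a ord0 j + b ord0 j.
Proof.
move=> hA hB; have [ha ha'] := hA i j; have [hb hb'] := hB i j.
move: ha hb; rewrite !ler_norml => /andP[? ?] /andP[? ?].
apply/andP; split; lra.
Qed.

Definition max_dist (a b : 'rV[R]_n) : R :=
  \big[Num.max/0]_i `|a ord0 i - b ord0 i|.

Lemma max_dist_ge0 (a b : 'rV[R]_n) : 0 <= max_dist a b.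
Proof.
by rewrite /max_dist; elim/big_ind: _ => //= u v hu hv; rewrite le_max hu.
Qed.

Lemma dist_le_max_dist (a b : 'rV[R]_n) i :
  `|a ord0 i - b ord0 i| <= max_dist a b.
Proof. by rewrite /max_dist (bigD1 i) //= le_max lexx. Qed.

Lemma max_dist_le (a b : 'rV[R]_n) j :
  in_A r a -> in_A r b -> max_dist a b <= a ord0 j + b ord0 j.
Proof.
move=> hA hB; rewrite /max_dist; elim/big_ind: _ => //= [|u v hu hv|i _].
- by rewrite addr_ge0 // in_A_ge0.
- by rewrite ge_max hu hv.
- exact: in_A_dist_le.
Qed.

Definition extend_row (b : 'rV[R]_n) (x : R) : 'rV[R]_n.+1 :=
  \row_j if unlift ord_max j is Some j' then b ord0 j' else x.

Lemma proj_last_extend_row (b : 'rV[R]_n) x : proj_last (extend_row b x) = b.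
Proof. by apply/rowP => i; rewrite !mxE liftK. Qed.

Lemma in_A_border_extend_row (a b : 'rV[R]_n) x :
  in_A r b -> 0 <= x ->
  (forall i, `|a ord0 i - b ord0 i| <= x <= a ord0 i + b ord0 i) ->
  in_A (border r a) (extend_row b x).
Proof.
move=> hB x0 hx i j; rewrite !mxE.
have hx' k : `|b ord0 k - x| <= a ord0 k /\ a ord0 k <= b ord0 k + x.
  have /andP[] := hx k; rewrite !ler_norml => /andP[? ?] ?.
  split; [apply/andP; split|]; lra.
case: (unliftP ord_max i) => [i' _|_]; case: (unliftP ord_max j) => [j' _|_].
- exact: hB.
- exact: hx'.
- by rewrite distrC [x + _]addrC; apply: hx'.
- by rewrite subrr normr0; split => //; lra.
Qed.

End Extension.

Theorem corollary1 (R : realType) (n : nat) (r : 'M[R]_n) (a : 'rV[R]_n) :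
  in_Rn r -> in_A r a ->
  forall b : 'rV[R]_n, in_A r b ->
  exists c : 'rV[R]_n.+1, in_A (border r a) c /\ proj_last c = b.
Proof.
move=> _ hA b hB; exists (extend_row b (max_dist a b)).
split; last exact: proj_last_extend_row.
apply: in_A_border_extend_row => //; first exact: max_dist_ge0.
by move=> i; rewrite dist_le_max_dist (max_dist_le _ hA hB).
Qed.
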